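(* Let $X=\{x_j:j\in J\}\subset\mathbb{R}^2$ be a finite set with $n=|J|$, and let $\mathcal{D}$ be any farthest point Delaunay triangulation of $X$. A point $s\in\mathbb{R}^2$ is the (quadratic) min-power centre of $X$ if and only if there is a face $D$ of $\mathcal{D}$ (a vertex, an edge, or a triangle) such that $s\in\mathrm{int}(T(D))$ and $s\in V_D$.
   Context: For $s\in\mathbb{R}^2$ let $P(s)=\sum_{i\in J}\|s-x_i\|^2+\max_{i\in J}\|s-x_i\|^2$ (Euclidean norm). The min-power centre $s^*$ of $X$ is the unique minimiser of $P$. Let $M=\frac1n\sum_{i\in J}x_i$ be the centroid, and let $T:\mathbb{R}^2\to\mathbb{R}^2$ be the homothety $T(y)=\frac{1}{n+1}(y+nM)$; thus $T(x_j)=M_j:=\frac{1}{n+1}\big(x_j+\sum_{i\in J}x_i\big)$. The farthest point Voronoi diagram of $X$ partitions the plane into regions $V(x_j)=\{s:\|s-x_j\|=\max_{i\in J}\|s-x_i\|\}$. A farthest point Delaunay triangulation of $X$ is a triangulation of (the extreme points of) $X$ such that the circumcircle of every triangle encloses all points of $X$; it is dual to the farthest point Voronoi diagram. For a face $D$ of $\mathcal{D}$ with vertex index set $J_D$, its dual face is $V_D=\bigcap_{j\in J_D}V(x_j)$. $\mathrm{int}(\cdot)$ denotes relative interior of a face, with the convention $\mathrm{int}(\{x\})=\{x\}$ for a single point. *)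

From HB Require Import structures.
From mathcomp Require Import all_boot all_order all_algebra.
From mathcomp Require Import reals.
Set Implicit Arguments. Unset Strict Implicit. Unset Printing Implicit Defensive.
Import Order.TTheory GRing.Theory Num.Theory.
Local Open Scope ring_scope.

Section Defs.
Variable R : realType.
Notation pt := 'rV[R]_2.

Definition sqdist (p q : pt) : R := \sum_(k < 2) (p ord0 k - q ord0 k) ^+ 2.

Definition hull (S : pt -> Prop) (p : pt) : Prop :=
  exists (m : nat) (z : 'I_m -> pt) (mu : 'I_m -> R),
    [/\ forall i, S (z i), forall i, 0 <= mu i, \sum_i mu i = 1
      & p = \sum_i mu i *: z i].

Definition aff (S : pt -> Prop) (p : pt) : Prop :=
  exists (m : nat) (z : 'I_m -> pt) (mu : 'I_m -> R),
    [/\ forall i, S (z i), \sum_i mu i = 1 & p = \sum_i mu i *: z i].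

(* relative interior of a set: points having a neighbourhood,
   within the affine hull, contained in the set.  For a singleton
   this is the point itself. *)
Definition relint (S : pt -> Prop) (p : pt) : Prop :=
  S p /\ exists e : R, 0 < e /\
    forall q, aff S q -> sqdist p q < e ^+ 2 -> S q.

Definition image_set (f : pt -> pt) (S : pt -> Prop) (p : pt) : Prop :=
  exists q, S q /\ p = f q.

Variable n : nat.
Variable x : 'I_n -> pt.

Definition pts (A : {set 'I_n}) (p : pt) : Prop := exists2 j, j \in A & p = x j.

Definition face_set (A : {set 'I_n}) : pt -> Prop := hull (pts A).

Definition extreme (j : 'I_n) : Prop :=
  ~ hull (fun p => exists2 i, i != j & p = x i) (x j).

Definition aff_indep (A : {set 'I_n}) : Prop :=
  forall mu : 'I_n -> R,
    (forall i, i \notin A -> mu i = 0) ->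
    \sum_i mu i = 0 -> \sum_i mu i *: x i = 0 ->
    forall i, mu i = 0.

(* F is a triangulation of the extreme points of X, given as a
   (geometric) simplicial complex by the vertex index sets of its faces *)
Definition triangulation (F : {set {set 'I_n}}) : Prop :=
  [/\ (forall A, A \in F -> (1 <= #|A| <= 3)%N /\ aff_indep A),
      (forall A B : {set 'I_n}, A \in F -> B \subset A -> B != set0 -> B \in F),
      (forall j, [set j] \in F <-> extreme j),
      (forall p, hull (fun q => exists2 j, extreme j & q = x j) p <->
                 exists2 A, A \in F & face_set A p)
    & (forall A B p, A \in F -> B \in F -> face_set A p -> face_set B p ->
                     face_set (A :&: B) p)].

Definition farthest_delaunay (F : {set {set 'I_n}}) : Prop :=
  triangulation F /\
  forall A, A \in F -> #|A| = 3 ->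
    exists (c : pt) (r : R),
      (forall j, j \in A -> sqdist c (x j) = r) /\
      (forall i, sqdist c (x i) <= r).

(* max_i ||s - x_i||^2 (all terms are nonnegative, 0 is a neutral element) *)
Definition maxdist (s : pt) : R := \big[Num.max/0]_i sqdist s (x i).

Definition P (s : pt) : R := \sum_i sqdist s (x i) + maxdist s.

Definition minpower_centre (s : pt) : Prop := forall t, P s <= P t.

Definition centroid : pt := (n%:R)^-1 *: \sum_i x i.
Definition T (y : pt) : pt := (n.+1%:R)^-1 *: (y + n%:R *: centroid).

Definition Vreg (j : 'I_n) (s : pt) : Prop := sqdist s (x j) = maxdist s.
Definition VD (A : {set 'I_n}) (s : pt) : Prop := forall j, j \in A -> Vreg j s.

End Defs.

From HB Require Import structures.
From mathcomp Require Import all_boot all_order all_algebra.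
From mathcomp Require Import reals ring lra.
From mathcomp Require Import boolp classical_sets topology normedtype sequences derive.
Import Order.TTheory GRing.Theory Num.Theory.
Import numFieldTopology.Exports numFieldNormedType.Exports.
Local Open Scope ring_scope.
Set Implicit Arguments. Unset Strict Implicit. Unset Printing Implicit Defensive.

(* Sufficiency: if s = T c with c a convex combination of vertices of a face that
   are all farthest from s, the parallel axis identity gives
   P t - P s >= (n+1) ||t - s||^2 for every t.
   Necessity: at a minimiser s, first-order optimality puts c := T^-1 s in the
   convex hull of the points farthest from s (otherwise a separating direction
   decreases P), and these are extreme points of X.  If c lies in a triangle of
   the triangulation, the circumdisc encloses X and the same identity shows that
   every vertex carrying weight in c is farthest from s.  Otherwise c lies in the
   relative interior of a vertex or an edge; extremality and the covering property
   of the triangulation force the weights of c on the farthest points to be its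
   barycentric coordinates in that face.  Relative interiority of T c finally
   follows from affine independence, via a compactness lower bound on the
   weights. *)

Local Notation r0 := (@ord0 0).
Local Notation i0 := (@ord0 1).
Local Notation i1 := (@ord_max 1).

Section Averages.
Variables (R : numDomainType) (I : finType) (w : I -> R).
Hypothesis w_sum1 : \sum_i w i = 1.

Lemma weight_neq0 : exists i, w i != 0.
Proof.
case: (pickP (fun i => w i != 0)) => [i wi|w0]; first by exists i.
move/eqP: w_sum1; rewrite big1 => [|i _]; last by apply/eqP/negbFE/w0.
by rewrite eq_sym oner_eq0.
Qed.

Lemma avg_supp_const (f : I -> R) M :
  (forall i, w i != 0 -> f i = M) -> \sum_i w i * f i = M.
Proof.
move=> fM; rewrite -[M]mul1r -w_sum1 mulr_suml; apply: eq_bigr => i _.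
by have [->|/fM ->] := eqVneq (w i) 0; rewrite ?mul0r.
Qed.

Hypothesis w_ge0 : forall i, 0 <= w i.

Lemma avg_le (f : I -> R) M : (forall i, f i <= M) -> \sum_i w i * f i <= M.
Proof.
move=> fM; apply: le_trans (_ : \sum_i w i * M <= _).
  by apply: ler_sum => i _; apply: ler_wpM2l.
by rewrite -mulr_suml w_sum1 mul1r.
Qed.

Lemma avg_eq_max (f : I -> R) M : (forall i, f i <= M) ->
  M <= \sum_i w i * f i -> forall i, w i != 0 -> f i = M.
Proof.
move=> fM Mle i wi.
have gap0 : \sum_j w j * (M - f j) = 0.
  apply/eqP; rewrite eq_le sumr_ge0 ?andbT => [|j _]; last first.
    by rewrite mulr_ge0 ?subr_ge0.
  under eq_bigr do rewrite mulrBr.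
  by rewrite sumrB -mulr_suml w_sum1 mul1r subr_le0.
have gap_ge0 j : true -> 0 <= w j * (M - f j) by rewrite mulr_ge0 ?subr_ge0.
have /eqP := psumr_eq0P gap_ge0 gap0 (i := i) isT.
by rewrite mulf_eq0 (negbTE wi) subr_eq0 => /eqP.
Qed.

End Averages.

Section Plane.
Variable R : realType.
Local Notation pt := 'rV[R]_2.
Implicit Types p q : pt.

Definition dotp p q : R := p r0 i0 * q r0 i0 + p r0 i1 * q r0 i1.

Lemma sqdistE p q : sqdist p q = (p r0 i0 - q r0 i0) ^+ 2 + (p r0 i1 - q r0 i1) ^+ 2.
Proof.
rewrite /sqdist big_ord_recr big_ord_recr big_ord0 /= add0r.
by have -> : widen_ord (leqnSn 1) ord_max = i0 by apply: val_inj.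
Qed.

Lemma row2P p q : p r0 i0 = q r0 i0 -> p r0 i1 = q r0 i1 -> p = q.
Proof.
move=> e0 e1; apply/rowP => -[[|[|//]] lt_j2].
  by rewrite (_ : Ordinal lt_j2 = i0) //; apply: val_inj.
by rewrite (_ : Ordinal lt_j2 = i1) //; apply: val_inj.
Qed.

Lemma sqdist_ge0 p q : 0 <= sqdist p q.
Proof. by rewrite sqdistE addr_ge0 ?sqr_ge0. Qed.

Lemma sqdist_eq0 p q : sqdist p q = 0 -> p = q.
Proof.
rewrite sqdistE => /eqP; rewrite paddr_eq0 ?sqr_ge0 // !sqrf_eq0 !subr_eq0.
by case/andP => /eqP e0 /eqP e1; apply: row2P.
Qed.

Lemma sqdist_shift p q d e :
  sqdist (p + e *: d) q = sqdist p q + 2 * e * dotp d (p - q) + e ^+ 2 * dotp d d.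
Proof. by rewrite !sqdistE /dotp !mxE; ring. Qed.

Lemma coord_sum (I : finType) (mu : I -> R) (z : I -> pt) k :
  (\sum_i mu i *: z i) r0 k = \sum_i mu i * z i r0 k.
Proof. by rewrite summxE; apply: eq_bigr => i _; rewrite mxE. Qed.

Lemma parallel_axis1 (I : finType) (nu z : I -> R) a :
  \sum_i nu i = 1 ->
  \sum_i nu i * (a - z i) ^+ 2 =
  (a - \sum_i nu i * z i) ^+ 2 + \sum_i nu i * (\sum_j nu j * z j - z i) ^+ 2.
Proof.
move=> nu_sum1; set c := \sum_j nu j * z j.
have -> : \sum_i nu i * (a - z i) ^+ 2 =
    \sum_i (nu i * ((a - c) * (a + c)) - 2 * (a - c) * (nu i * z i))
    + \sum_i nu i * (c - z i) ^+ 2.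
  by rewrite -big_split /=; apply: eq_bigr => i _; ring.
rewrite big_split /= -mulr_suml nu_sum1 sumrN -mulr_sumr -/c; congr (_ + _); ring.
Qed.

Lemma parallel_axis (I : finType) (nu : I -> R) (z : I -> pt) p :
  \sum_i nu i = 1 ->
  \sum_i nu i * sqdist p (z i) =
  sqdist p (\sum_i nu i *: z i) + \sum_i nu i * sqdist (\sum_j nu j *: z j) (z i).
Proof.
move=> nu_sum1.
have split_coords q : \sum_i nu i * sqdist q (z i) =
    \sum_i nu i * (q r0 i0 - z i r0 i0) ^+ 2 + \sum_i nu i * (q r0 i1 - z i r0 i1) ^+ 2.
  by rewrite -big_split; apply: eq_bigr => i _; rewrite sqdistE mulrDr.
rewrite split_coords (parallel_axis1 _ (p r0 i0) nu_sum1).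
rewrite (parallel_axis1 _ (p r0 i1) nu_sum1) split_coords sqdistE !coord_sum; ring.
Qed.

Lemma sqdist_barycentre2 (m : R) p q s t : (m + 1) *: s = m *: p + q ->
  m * sqdist t p + sqdist t q - (m * sqdist s p + sqdist s q) = (m + 1) * sqdist t s.
Proof.
move=> s_def; have coord k : q r0 k = (m + 1) * s r0 k - m * p r0 k.
  by have := congr1 (fun y : pt => y r0 k) s_def; rewrite !mxE => ->; ring.
by rewrite !sqdistE !coord; ring.
Qed.

End Plane.

Section Hull.
Variables (R : realType) (n : nat) (x : 'I_n -> 'rV[R]_2).

Lemma hull_weightsP (Q : 'I_n -> Prop) p :
  hull (fun q => exists2 j, Q j & q = x j) p <->
  exists nu : 'I_n -> R, [/\ forall i, nu i != 0 -> Q i, forall i, 0 <= nu i,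
    \sum_i nu i = 1 & p = \sum_i nu i *: x i].
Proof.
split.
  case=> m [z [mu [zQ mu_ge0 mu_sum1 ->]]].
  have /choice [f fP] : forall k, exists j, Q j /\ z k = x j.
    by move=> k; case: (zQ k) => j; exists j.
  exists (fun i => \sum_(k | f k == i) mu k); split.
  - move=> i; case: (pickP (fun k => f k == i)) => [k /eqP <-|none].
      by case: (fP k).
    by rewrite big_pred0 ?eqxx.
  - by move=> i; apply: sumr_ge0.
  - by rewrite -mu_sum1 (partition_big f xpredT).
  - rewrite (partition_big f xpredT) //=; apply: eq_bigr => i _.
    by rewrite scaler_suml; apply: eq_bigr => k /eqP <-; case: (fP k) => _ ->.
case=> nu [nuQ nu_ge0 nu_sum1 ->].
have [j nuj] := weight_neq0 nu_sum1.
exists n, (fun i => if nu i != 0 then x i else x j), nu; split => //.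
  by move=> i; case: ifP => [/nuQ|_]; [exists i | exists j; first exact: nuQ].
by apply: eq_bigr => i _; case: ifP => // /negbFE/eqP ->; rewrite !scale0r.
Qed.

Lemma hull_vertex (Q : 'I_n -> Prop) j : Q j -> hull (fun p => exists2 i, Q i & p = x i) (x j).
Proof.
move=> Qj; exists 1%N, (fun _ => x j), (fun _ => 1).
by split => [_|_||]; rewrite ?big_ord1 ?scale1r //; exists j.
Qed.

Lemma extreme_weight_neq0 j (nu : 'I_n -> R) : extreme x j ->
  (forall i, 0 <= nu i) -> \sum_i nu i = 1 -> x j = \sum_i nu i *: x i -> nu j != 0.
Proof.
move=> j_ext nu_ge0 nu_sum1 xjE; apply/negP => /eqP nuj0; apply: j_ext.
apply/hull_weightsP; exists nu; split => // i; apply: contraNneq => ->.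
by rewrite nuj0 eqxx.
Qed.

Lemma aff_indep_weights_eq (A : {set 'I_n}) (mu nu : 'I_n -> R) : aff_indep x A ->
  (forall i, i \notin A -> mu i = 0) -> (forall i, i \notin A -> nu i = 0) ->
  \sum_i mu i = \sum_i nu i -> \sum_i mu i *: x i = \sum_i nu i *: x i -> mu =1 nu.
Proof.
move=> indep muA nuA sum_eq comb_eq i; apply/eqP; rewrite -subr_eq0; apply/eqP.
apply: (indep (fun i => mu i - nu i)) => [j jA||]; first by rewrite muA ?nuA ?subrr.
  by rewrite sumrB sum_eq subrr.
by under eq_bigr do rewrite scalerBl; rewrite sumrB comb_eq subrr.
Qed.

Lemma hull_segment (Q : 'I_n -> Prop) p q t :
  let S := hull (fun y => exists2 j, Q j & y = x j) in
  S p -> S q -> 0 <= t <= 1 -> S (p + t *: (q - p)).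
Proof.
move=> S /hull_weightsP [mu [muQ mu_ge0 mu_sum1 ->]].
move=> /hull_weightsP [nu [nuQ nu_ge0 nu_sum1 ->]] /andP [t_ge0 t_le1].
apply/hull_weightsP; exists (fun i => (1 - t) * mu i + t * nu i); split.
- move=> i; have [mu0|/muQ //] := eqVneq (mu i) 0.
  by rewrite mu0 mulr0 add0r mulf_eq0 negb_or => /andP [_ /nuQ].
- by move=> i; rewrite addr_ge0 ?mulr_ge0 ?subr_ge0.
- by rewrite big_split /= -!mulr_sumr mu_sum1 nu_sum1 !mulr1 subrK.
- under [RHS]eq_bigr do rewrite scalerDl -!scalerA.
  by rewrite big_split /= -!scaler_sumr scalerBr scalerBl scale1r addrCA addrC.
Qed.

Lemma le_maxdist s i : sqdist s (x i) <= maxdist x s.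
Proof. exact: le_bigmax. Qed.

Lemma maxdist_attained s : (0 < n)%N -> exists j, maxdist x s = sqdist s (x j).
Proof.
move=> n_gt0; rewrite /maxdist.
have [j _ ->] := @eq_bigmax _ _ _ 0 (Ordinal n_gt0) xpredT (fun i => sqdist s (x i))
  isT (fun i _ => sqdist_ge0 _ _).
by exists j.
Qed.

End Hull.

Section Homothety.
Variables (R : realType) (n : nat) (x : 'I_n -> 'rV[R]_2).
Local Notation pt := 'rV[R]_2.

Definition Tinv (s : pt) : pt := n.+1%:R *: s - \sum_i x i.

Lemma scale_centroid : n%:R *: centroid x = \sum_i x i.
Proof.
rewrite /centroid scalerA; case: n x => [|m] y; first by rewrite big_ord0 scaler0.
by rewrite divff ?pnatr_eq0 // scale1r.
Qed.

Lemma TE y : T x y = n.+1%:R^-1 *: (y + \sum_i x i).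
Proof. by rewrite /T scale_centroid. Qed.

Lemma TinvK s : T x (Tinv s) = s.
Proof. by rewrite TE /Tinv subrK scalerA mulVf ?pnatr_eq0 // scale1r. Qed.

Lemma T_affine m (mu : 'I_m -> R) (z : 'I_m -> pt) : \sum_k mu k = 1 ->
  \sum_k mu k *: T x (z k) = T x (\sum_k mu k *: z k).
Proof.
move=> mu_sum1; rewrite TE.
under eq_bigr do rewrite TE scalerA mulrC -scalerA scalerDr.
by rewrite -scaler_sumr big_split /= -scaler_suml mu_sum1 scale1r.
Qed.

Lemma sqdist_T y z : sqdist (T x y) (T x z) = n.+1%:R^-1 ^+ 2 * sqdist y z.
Proof. by rewrite !sqdistE !TE !mxE; ring. Qed.

Hypothesis n_gt0 : (0 < n)%N.

Lemma sum_sqdist_centroid t : \sum_i sqdist t (x i) =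
  n%:R * sqdist t (centroid x) + \sum_i sqdist (centroid x) (x i).
Proof.
have n_neq0 : n%:R != 0 :> R by rewrite pnatr_eq0 -lt0n.
have w_sum1 : \sum_(i < n) n%:R^-1 = 1 :> R.
  by rewrite sumr_const card_ord -[RHS](mulVf n_neq0) mulr_natr.
have /esym := parallel_axis (fun i => x i) t w_sum1.
rewrite -!mulr_sumr -scaler_sumr -/(centroid x) => /(congr1 (fun r => n%:R * r)).
by rewrite mulrA mulfV // mul1r mulrDr mulrA mulfV // mul1r.
Qed.

Lemma minpower_centre_T (c : pt) (nu : 'I_n -> R) :
  (forall i, 0 <= nu i) -> \sum_i nu i = 1 -> c = \sum_i nu i *: x i ->
  (forall i, nu i != 0 -> Vreg x i (T x c)) -> minpower_centre x (T x c).
Proof.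
move=> nu_ge0 nu_sum1 c_def active t; set s := T x c.
set V := \sum_i nu i * sqdist c (x i).
have mean u : \sum_i nu i * sqdist u (x i) = sqdist u c + V.
  by rewrite parallel_axis // -c_def.
have max_s : maxdist x s = sqdist s c + V.
  by rewrite -mean; symmetry; apply: avg_supp_const.
have max_t : sqdist t c + V <= maxdist x t.
  by rewrite -mean; apply: avg_le => // i; apply: le_maxdist.
have shift : n%:R * sqdist t (centroid x) + sqdist t c
    - (n%:R * sqdist s (centroid x) + sqdist s c) = n.+1%:R * sqdist t s.
  rewrite -natr1; apply: sqdist_barycentre2.
  by rewrite /s /T scalerA natr1 mulfV ?pnatr_eq0 // scale1r addrC.
rewrite /P (sum_sqdist_centroid s) (sum_sqdist_centroid t) max_s.
have : 0 <= n.+1%:R * sqdist t s by rewrite mulr_ge0 ?sqdist_ge0.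
lra.
Qed.

End Homothety.

Section SmallSteps.
Variable R : realFieldType.
Local Open Scope classical_set_scope.
Local Open Scope ring_scope.

Lemma near0_quadratic_lt0 (c a K : R) : c <= 0 -> c < 0 \/ a < 0 ->
  \forall e \near 0^'+, c + 2 * e * a + e ^+ 2 * K < 0.
Proof.
move=> c_le0 c_or_a.
have absK := ler_norm K; have absK_ge0 := normr_ge0 K.
case: c_or_a => [c_lt0|a_lt0].
- pose B := 2 * `|a| + `|K| + 1.
  have B_gt0 : 0 < B by rewrite /B; have := normr_ge0 a; lra.
  have cB_gt0 : 0 < - c / B by rewrite divr_gt0 // oppr_gt0.
  near=> e.
  have e_gt0 : 0 < e by near: e; exact: nbhs_right_gt.
  have e_lt1 : e < 1 by near: e; exact: nbhs_right_lt ltr01.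
  have eB : e * B < - c.
    rewrite -ltr_pdivlMr; last exact: B_gt0.
    near: e; exact: nbhs_right_lt cB_gt0.
  have ea := ler_wpM2l (ltW e_gt0) (ler_norm a).
  have e2 : e ^+ 2 <= e by rewrite expr2 ger_pMl // ltW.
  have eK := le_trans (ler_wpM2l (sqr_ge0 e) absK) (ler_wpM2r absK_ge0 e2).
  rewrite /B in eB; lra.
- have K1_gt0 : 0 < `|K| + 1 by lra.
  have aK_gt0 : 0 < - a / (`|K| + 1) by rewrite divr_gt0 // oppr_gt0.
  near=> e.
  have e_gt0 : 0 < e by near: e; exact: nbhs_right_gt.
  have eK : e * (`|K| + 1) < - a.
    rewrite -ltr_pdivlMr; last exact: K1_gt0.
    near: e; exact: nbhs_right_lt aK_gt0.
  have eK' := ler_wpM2l (ltW e_gt0) absK.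
  have : e * (2 * a + e * K) < 0 by rewrite pmulr_rlt0 //; lra.
  lra.
Unshelve. all: by end_near.
Qed.

End SmallSteps.

Section FirstOrder.
Variables (R : realType) (n : nat) (x : 'I_n -> 'rV[R]_2).
Local Open Scope classical_set_scope.
Local Open Scope ring_scope.

Lemma P_shift s d e j : maxdist x (s + e *: d) = sqdist (s + e *: d) (x j) ->
  P x (s + e *: d) = P x s + (sqdist s (x j) - maxdist x s
    + 2 * e * dotp d (Tinv x s - x j) + e ^+ 2 * (n.+1%:R * dotp d d)).
Proof.
move=> max_sed; rewrite /P max_sed sqdist_shift.
under eq_bigr do rewrite sqdist_shift.
have dotp_Tinv : dotp d (Tinv x s - x j) = \sum_i dotp d (s - x i) + dotp d (s - x j).
  rewrite /dotp /Tinv !mxE !summxE.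
  under [X in _ = X + _]eq_bigr do rewrite !mxE.
  rewrite big_split /= -!mulr_sumr !sumrB !sumr_const !card_ord -natr1; ring.
rewrite !big_split /= -!mulr_sumr sumr_const card_ord dotp_Tinv -natr1; ring.
Qed.

Hypothesis n_gt0 : (0 < n)%N.

Lemma minpower_first_order s : minpower_centre x s ->
  forall d, exists2 j, Vreg x j s & 0 <= dotp d (Tinv x s - x j).
Proof.
move=> s_min d; apply: contrapT => no_j.
have descent j : \forall e \near 0^'+, sqdist s (x j) - maxdist x s
    + 2 * e * dotp d (Tinv x s - x j) + e ^+ 2 * (n.+1%:R * dotp d d) < 0.
  apply: near0_quadratic_lt0; first by rewrite subr_le0 le_maxdist.
  have [active|inactive] := eqVneq (sqdist s (x j)) (maxdist x s).
    by right; rewrite ltNge; apply/negP => ge0; apply: no_j; exists j.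
  by left; rewrite subr_lt0 lt_neqAle inactive le_maxdist.
have [e all_descent] := filter_ex (filter_forall _ descent).
have [j max_j] := maxdist_attained x (s + e *: d) n_gt0.
have := s_min (s + e *: d); rewrite (P_shift max_j).
by have := all_descent j; lra.
Qed.

End FirstOrder.

Section Compactness.
Variables (R : realType) (n : nat) (x : 'I_n -> 'rV[R]_2).
Local Notation vec := 'rV[R]_n.
Local Open Scope classical_set_scope.
Local Open Scope ring_scope.

Lemma continuous_sum (T : topologicalType) (V : normedModType R) (I : finType)
    (f : I -> T -> V) :
  (forall i, continuous (f i)) -> continuous (fun t => \sum_i f i t).
Proof.
move=> f_cont; rewrite unlock; elim: (index_enum I) => [|i r IHr] /=.
  exact: cst_continuous.
by move=> t; apply: continuousD; [apply: f_cont | apply: IHr].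
Qed.

Lemma comb_continuous : continuous (fun v : vec => \sum_i v r0 i *: x i).
Proof.
apply: continuous_sum => i v.
exact: continuousZr_tmp (@coord_continuous R 1 n r0 i v).
Qed.

Lemma closed_level (f : vec -> R) c : continuous f -> closed [set v | f v = c].
Proof.
move=> f_cont; apply: (@preimage_closed _ _ f [set r | r = c]); last exact: closed_eq.
by move=> v _; apply: f_cont.
Qed.

Lemma closed_forall (Q : 'I_n -> set vec) :
  (forall i, closed (Q i)) -> closed [set v | forall i, Q i v].
Proof.
move=> Q_closed; have -> : [set v | forall i, Q i v] = \bigcap_i Q i.
  by apply/seteqP; split => [v Qv i _|v Qv i]; apply: Qv.
exact: closed_bigI.
Qed.

Definition supported (A : {set 'I_n}) := [set v : vec | forall i, i \notin A -> v r0 i = 0].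

Lemma closed_supported A : closed (supported A).
Proof.
apply: closed_forall => i; have [iA|iNA] := boolP (i \in A).
  rewrite (_ : (fun v : vec => _) = setT) ?closedT //.
  by apply/seteqP; split => // v _; rewrite iA.
rewrite (_ : (fun v : vec => _) = [set v | v r0 i = 0]).
  exact/closed_level/coord_continuous.
by apply/seteqP; split => v /=; [apply | move=> ->].
Qed.

Lemma compact_in_cube (S : set vec) :
  closed S -> (forall v, S v -> forall i, `|v r0 i| <= 1) -> compact S.
Proof.
move=> S_closed S_cube.
apply: (subclosed_compact S_closed (rV_compact (fun _ => @segment_compact R (-1) 1))).
by move=> v /S_cube v_cube i; rewrite /= in_itv /= -ler_norml.
Qed.

Definition simplex (A : {set 'I_n}) :=
  supported A `&` [set v | forall i, 0 <= v r0 i] `&` [set v | \sum_i v r0 i = 1].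

Lemma simplex_compact A : compact (simplex A).
Proof.
apply: compact_in_cube.
  apply: closedI; last first.
    by apply: closed_level; apply: continuous_sum => i; apply: coord_continuous.
  apply: closedI; first exact: closed_supported.
  apply: closed_forall => i.
  apply: (@preimage_closed _ _ (fun v : vec => v r0 i) [set r | 0 <= r]); last exact: closed_ge.
  by move=> v _; apply: coord_continuous.
move=> v [[_ v_ge0] v_sum1] i; rewrite ger0_norm // -v_sum1.
by rewrite (bigD1 i) //= lerDl sumr_ge0.
Qed.

Lemma face_setE A : face_set x A = (fun v : vec => \sum_i v r0 i *: x i) @` simplex A.
Proof.
apply/seteqP; split => p.
  case/hull_weightsP => nu [nuA nu_ge0 nu_sum1 ->].
  exists (\row_i nu i); last by apply: eq_bigr => i _; rewrite mxE.
  split; [split|] => [i|i|]; rewrite ?mxE //.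
    by apply: contraNeq => /nuA.
  by rewrite -nu_sum1; apply: eq_bigr => i _; rewrite mxE.
case=> v [[vA v_ge0] v_sum1] <-; apply/hull_weightsP; exists (fun i => v r0 i).
by split => // i; apply: contraNT => /vA ->.
Qed.

Lemma face_set_compact A : compact (face_set x A).
Proof.
rewrite face_setE; apply: continuous_compact; last exact: simplex_compact.
exact: continuous_subspaceT comb_continuous.
Qed.

End Compactness.

Section Separation.
Variables (R : realType) (n : nat) (x : 'I_n -> 'rV[R]_2).
Local Notation pt := 'rV[R]_2.
Local Open Scope classical_set_scope.
Local Open Scope ring_scope.

Lemma sqdist_continuous q : continuous (fun p : pt => sqdist p q).
Proof.
have coord k : continuous (fun p : pt => p r0 k - q r0 k).
  by move=> p; apply: continuousB; [apply: coord_continuous | apply: cst_continuous].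
rewrite (_ : (fun p : pt => _) = fun p : pt => (p r0 i0 - q r0 i0) * (p r0 i0 - q r0 i0)
    + (p r0 i1 - q r0 i1) * (p r0 i1 - q r0 i1)).
  move=> p; exact: (continuousD (continuousM (coord i0 p) (coord i0 p))
    (continuousM (coord i1 p) (coord i1 p))).
by apply/funext => p; rewrite sqdistE !expr2.
Qed.

Lemma nearest_point_dotp (S : set pt) p q y :
  (forall t, 0 <= t <= 1 -> S (p + t *: (y - p))) ->
  (forall z, S z -> sqdist p q <= sqdist z q) -> 0 <= dotp (y - p) (p - q).
Proof.
move=> S_seg p_min; rewrite leNgt; apply/negP => obtuse.
have descent := near0_quadratic_lt0 (dotp (y - p) (y - p)) (lexx 0) (or_intror obtuse).
have : \forall t \near 0^'+, 0 <= t <= 1 /\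
    0 + 2 * t * dotp (y - p) (p - q) + t ^+ 2 * dotp (y - p) (y - p) < 0.
  near=> t; split; last by near: t.
  apply/andP; split; first by apply: ltW; near: t; exact: nbhs_right_gt.
  by near: t; exact: nbhs_right_le ltr01.
case/filter_ex => t [t01 closer].
by have := p_min _ (S_seg t t01); rewrite sqdist_shift; lra.
Unshelve. all: by end_near.
Qed.

Lemma face_set_of_no_separation (A : {set 'I_n}) q j0 : j0 \in A ->
  (forall d, exists2 j, j \in A & 0 <= dotp d (q - x j)) -> face_set x A q.
Proof.
move=> j0A no_sep.
have [p] := EVT_min_rV (ex_intro _ _ (hull_vertex x j0A)) (@face_set_compact _ _ x A)
  (continuous_subspaceT (sqdist_continuous (q := q))).
rewrite inE => pA p_min.
have obtuse j : j \in A -> 0 <= dotp (x j - p) (p - q).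
  move=> jA; apply: (nearest_point_dotp (S := face_set x A)) => [t t01|z zA].
    exact: hull_segment pA (hull_vertex x jA) t01.
  by apply: p_min; rewrite inE.
have [j jA sep] := no_sep (p - q).
have dist_dotp : sqdist p q = - (dotp (p - q) (q - x j) + dotp (x j - p) (p - q)).
  by rewrite sqdistE /dotp !mxE; ring.
suff <- : p = q by [].
apply: sqdist_eq0; apply/eqP; rewrite eq_le sqdist_ge0 andbT dist_dotp.
by have := obtuse j jA; lra.
Qed.

End Separation.

Section RelativeInterior.
Variables (R : realType) (n : nat) (x : 'I_n -> 'rV[R]_2).
Local Notation pt := 'rV[R]_2.
Local Notation vec := 'rV[R]_n.
Local Open Scope classical_set_scope.
Local Open Scope ring_scope.

Lemma sqdist_sub (p q : pt) : sqdist p q = sqdist (p - q) 0.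
Proof. by rewrite !sqdistE !mxE !subr0. Qed.

Lemma sqdistZ0 (c : R) (p : pt) : sqdist (c *: p) 0 = c ^+ 2 * sqdist p 0.
Proof. by rewrite !sqdistE !mxE; ring. Qed.

Definition unit_sphere (A : {set 'I_n}) := supported A `&`
  [set v : vec | \sum_i v r0 i = 0] `&` [set v | \sum_i v r0 i ^+ 2 = 1].

Lemma unit_sphere_compact A : compact (unit_sphere A).
Proof.
apply: compact_in_cube.
  apply: closedI; first apply: closedI; first exact: closed_supported.
    by apply: closed_level; apply: continuous_sum => i; apply: coord_continuous.
  apply: closed_level; apply: continuous_sum => i v.
  have := continuousM (@coord_continuous R 1 n r0 i v) (@coord_continuous R 1 n r0 i v).
  by under [X in {for _, continuous X}]eq_fun do rewrite -expr2.
move=> v [_ v_norm1] i; have : v r0 i ^+ 2 <= 1.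
  by rewrite -v_norm1 (bigD1 i) //= lerDl sumr_ge0 // => k _; apply: sqr_ge0.
have := normr_ge0 (v r0 i); rewrite -real_normK ?num_real //; nra.
Qed.

Lemma aff_indep_coercive (A : {set 'I_n}) : aff_indep x A ->
  exists2 k : R, 0 < k & forall delta : 'I_n -> R,
    (forall i, i \notin A -> delta i = 0) -> \sum_i delta i = 0 ->
    k * \sum_i delta i ^+ 2 <= sqdist (\sum_i delta i *: x i) 0.
Proof.
move=> indep; pose f (v : vec) := sqdist (\sum_i v r0 i *: x i) 0.
have f_cont : continuous f.
  move=> v; exact: (continuous_comp (@comb_continuous _ _ x v) (@sqdist_continuous _ 0 _)).
have normalize delta : (forall i, i \notin A -> delta i = 0) -> \sum_i delta i = 0 ->
    \sum_i delta i ^+ 2 != 0 -> exists2 v, unit_sphere A v &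
    f v * \sum_i delta i ^+ 2 = sqdist (\sum_i delta i *: x i) 0.
  move=> deltaA delta_sum0 norm_neq0.
  have norm_gt0 : 0 < \sum_i delta i ^+ 2.
    by rewrite lt_def norm_neq0 sumr_ge0 // => i _; apply: sqr_ge0.
  pose r := Num.sqrt (\sum_i delta i ^+ 2).
  have r_gt0 : 0 < r by rewrite sqrtr_gt0.
  have r2 : r ^+ 2 = \sum_i delta i ^+ 2 by rewrite sqr_sqrtr // ltW.
  exists (\row_i (delta i / r)); first split; first split.
  - by move=> i /deltaA; rewrite mxE => ->; rewrite mul0r.
  - by rewrite /=; under eq_bigr do rewrite mxE; rewrite -mulr_suml delta_sum0 mul0r.
  - rewrite /=; under eq_bigr do rewrite mxE expr_div_n.
    by rewrite -mulr_suml -r2 divff // expf_neq0 // gt_eqF.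
  rewrite /f; under eq_bigr do rewrite mxE mulrC -scalerA.
  by rewrite -scaler_sumr sqdistZ0 -r2 exprVn mulrAC mulVf ?mul1r // expf_neq0 ?gt_eqF.
have [[v0 v0S]|empty] := pselect (unit_sphere A !=set0); last first.
  exists 1 => // delta deltaA delta_sum0; rewrite mul1r.
  have [norm0|/(normalize _ deltaA delta_sum0) [v vS _]] := eqVneq (\sum_i delta i ^+ 2) 0.
    by rewrite norm0 sqdist_ge0.
  by case: empty; exists v.
(* k is the minimum of the map v |-> ||sum_i v_i x_i||^2 on the compact set of
   weight differences of unit norm. *)
have [v vS v_min] := EVT_min_rV (ex_intro _ v0 v0S) (unit_sphere_compact (A := A))
  (continuous_subspaceT f_cont).
move: vS; rewrite inE => -[[vA v_sum0] v_norm1].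
exists (f v).
  rewrite lt_def sqdist_ge0 andbT; apply/eqP => /sqdist_eq0 comb0.
  have v_eq0 := indep (fun i => v r0 i) vA v_sum0 comb0.
  suff : \sum_i v r0 i ^+ 2 = 0 by rewrite v_norm1 => /eqP; rewrite oner_eq0.
  by rewrite big1 // => i _; rewrite v_eq0 expr0n.
move=> delta deltaA delta_sum0.
have [norm0|/(normalize _ deltaA delta_sum0) [w wS <-]] := eqVneq (\sum_i delta i ^+ 2) 0.
  by rewrite norm0 mulr0 sqdist_ge0.
apply: ler_wpM2r; first by apply: sumr_ge0 => i _; apply: sqr_ge0.
by apply: v_min; rewrite inE.
Qed.

Lemma aff_T_face_weights (A : {set 'I_n}) q :
  aff (image_set (T x) (face_set x A)) q ->
  exists th : 'I_n -> R, [/\ forall i, i \notin A -> th i = 0, \sum_i th i = 1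
    & q = T x (\sum_i th i *: x i)].
Proof.
case=> m [z [mu [zA mu_sum1 ->]]].
have /choice [L LP] : forall k, exists lam : 'I_n -> R, [/\ forall i, i \notin A -> lam i = 0,
    \sum_i lam i = 1 & z k = T x (\sum_i lam i *: x i)].
  move=> k; have [c [/hull_weightsP [lam [lamA _ lam_sum1 ->]] ->]] := zA k.
  by exists lam; split => // i; apply: contraNeq => /lamA.
exists (fun i => \sum_k mu k * L k i); split.
- by move=> i iA; rewrite big1 // => k _; case: (LP k) => /(_ i iA) -> _ _; rewrite mulr0.
- rewrite exchange_big /= -mu_sum1; apply: eq_bigr => k _.
  by case: (LP k) => _ L_sum1 _; rewrite -mulr_sumr L_sum1 mulr1.
have zE k : z k = T x (\sum_i L k i *: x i) by case: (LP k).
under eq_bigr do rewrite zE.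
rewrite T_affine //; congr (T x _).
under [RHS]eq_bigr do rewrite scaler_suml.
rewrite exchange_big /=; apply: eq_bigr => k _.
by rewrite scaler_sumr; apply: eq_bigr => i _; rewrite scalerA.
Qed.

Lemma relint_T_face (A : {set 'I_n}) (beta : 'I_n -> R) : aff_indep x A ->
  (forall i, i \notin A -> beta i = 0) -> (forall i, i \in A -> 0 < beta i) ->
  \sum_i beta i = 1 ->
  relint (image_set (T x) (face_set x A)) (T x (\sum_i beta i *: x i)).
Proof.
move=> indep betaA beta_gt0 beta_sum1.
have face_weights (th : 'I_n -> R) : (forall i, i \notin A -> th i = 0) ->
    (forall i, i \in A -> 0 <= th i) -> \sum_i th i = 1 ->
    face_set x A (\sum_i th i *: x i).
  move=> thA th_ge0 th_sum1; apply/hull_weightsP; exists th; split => // [i|i].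
    by apply: contraNT => /thA ->.
  by have [/th_ge0 //|/thA ->] := boolP (i \in A).
split.
  exists (\sum_i beta i *: x i); split => //; apply: face_weights => // i iA.
  exact/ltW/beta_gt0.
have [k k_gt0 coercive] := aff_indep_coercive indep.
pose m := \big[Num.min/1]_(i in A) beta i.
have m_gt0 : 0 < m by apply/bigmin_gtP; split => // i /beta_gt0.
have m_le j : j \in A -> m <= beta j by apply: bigmin_le_cond.
pose s := n.+1%:R^-1 ^+ 2 : R.
have s_gt0 : 0 < s by rewrite exprn_gt0 // invr_gt0 ltr0n.
pose e := Num.min 1 (k * m ^+ 2 * s).
have e_gt0 : 0 < e.
  by rewrite lt_min ltr01 /=; apply: mulr_gt0 => //; apply: mulr_gt0 => //; apply: exprn_gt0.
exists e; split => // q /aff_T_face_weights [th [thA th_sum1 ->]].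
rewrite sqdist_T -/s => close.
have {close} close : sqdist (\sum_i beta i *: x i) (\sum_i th i *: x i) < k * m ^+ 2.
  have e2 : e ^+ 2 <= e by rewrite expr2 ger_pMl // ge_min lexx.
  have : e <= k * m ^+ 2 * s by rewrite ge_min lexx orbT.
  rewrite -(ltr_pM2l s_gt0); lra.
exists (\sum_i th i *: x i); split => //; apply: face_weights => // i iA.
have : k * (beta i - th i) ^+ 2 < k * m ^+ 2.
  apply: le_lt_trans close; rewrite sqdist_sub -sumrB.
  under [X in sqdist X _]eq_bigr do rewrite -scalerBl.
  apply: le_trans (coercive _ _ _) => [|j jA|]; last by rewrite sumrB beta_sum1 th_sum1 subrr.
    apply: ler_wpM2l; first exact: ltW.
    rewrite (bigD1 i) //= lerDl.
    by apply: sumr_ge0 => j _; apply: sqr_ge0.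
  by rewrite betaA ?thA ?subrr.
rewrite ltr_pM2l // leNgt => dist_lt; apply/negP => th_lt0.
by have := m_le i iA; have := m_gt0; nra.
Qed.

End RelativeInterior.

Section Segments.
Variables (R : realType) (n : nat) (x : 'I_n -> 'rV[R]_2).
Local Notation pt := 'rV[R]_2.
Local Open Scope classical_set_scope.
Local Open Scope ring_scope.

Lemma not_extreme_between j u w (t : R) : u != j -> w != j -> 0 <= t <= 1 ->
  x j = x u + t *: (x w - x u) -> ~ extreme x j.
Proof.
move=> uj wj t01 xjE; apply; rewrite xjE.
exact: hull_segment (hull_vertex x uj) (hull_vertex x wj) t01.
Qed.

Lemma extreme_on_line a b i (t : R) : a != b -> extreme x a -> extreme x b ->
  extreme x i -> x i = x a + t *: (x b - x a) -> i = a \/ i = b.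
Proof.
move=> ab a_ext b_ext i_ext xiE.
have [-> | ia] := eqVneq i a; first by left.
have [-> | ib] := eqVneq i b; first by right.
have coord k : x i r0 k = x a r0 k + t * (x b r0 k - x a r0 k) by rewrite xiE !mxE.
exfalso; have [t_le0 | t_gt0] := lerP t 0.
  have t1_gt0 : 0 < 1 - t by lra.
  apply: (not_extreme_between (u := i) (w := b) (t := - t / (1 - t))) a_ext.
  - exact: ia.
  - by rewrite eq_sym.
  - apply/andP; split; first by rewrite divr_ge0 ?oppr_ge0 // ltW.
    by rewrite ler_pdivrMr // mul1r; lra.
  - by apply: row2P; rewrite !mxE !coord; field; rewrite gt_eqF.
have [t_le1 | t_gt1] := lerP t 1.
  apply: (not_extreme_between (u := a) (w := b) (t := t)) i_ext.
  - by rewrite eq_sym.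
  - by rewrite eq_sym.
  - by rewrite t_le1 ltW.
  - exact: xiE.
apply: (not_extreme_between (u := a) (w := i) (t := t^-1)) b_ext.
- exact: ab.
- exact: ib.
- by rewrite invr_ge0 invf_le1 ?ltW //; lra.
- by apply: row2P; rewrite !mxE !coord; field; rewrite gt_eqF //; lra.
Qed.

Lemma limit_face (F : {set {set 'I_n}}) (c y : pt) :
  (forall e : R, 0 < e -> e <= 1 -> exists2 B, B \in F & face_set x B (c + e *: (y - c))) ->
  exists2 B, B \in F & face_set x B c /\
    exists e : R, [/\ 0 < e, e <= 1 & face_set x B (c + e *: (y - c))].
Proof.
move=> segment_covered.
pose p (e : R) := c + e *: (y - c).
have p_cont : continuous p.
  move=> e; have id_cont : {for e, continuous (fun z : R => z)} by apply: cvg_id.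
  have cst_cont : {for e, continuous (fun _ : R => c)} by apply: cst_continuous.
  exact: (continuousD cst_cont (@continuousZr_tmp R _ R _ (y - c) e id_cont)).
pose hit B := `[< exists e : R, [/\ 0 < e, e <= 1 & face_set x B (p e)] >].
pose U := \big[setU/set0]_(B <- [seq B <- enum F | hit B]) (p @^-1` face_set x B).
(* Only finitely many faces meet the segment; the union of their traces is
   closed and contains ]0, 1], hence also 0. *)
have U_closed : closed U.
  apply: closed_bigsetU => B _; apply: preimage_closed => [e _|]; first exact: p_cont.
  exact: compact_closed (@norm_hausdorff _ _) (@face_set_compact _ _ x B).
have U_seg e : 0 < e -> e <= 1 -> U e.
  move=> e_gt0 e_le1; have [B BF pB] := segment_covered e e_gt0 e_le1.
  rewrite /U -bigcup_seq; exists B => //=.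
  by rewrite mem_filter mem_enum BF andbT; apply/asboolP; exists e.
have : U 0.
  apply: (closed_cvg U U_closed _ 0 cvg_harmonic); apply: nearW => k.
  by apply: U_seg; rewrite ?invr_gt0 ?ltr0n // invf_le1 ?ltr0n // ler1n.
rewrite /U -bigcup_seq => -[B /=]; rewrite mem_filter mem_enum => /andP [/asboolP hitB BF].
by rewrite /p /preimage /= scale0r addr0 => cB; exists B.
Qed.

End Segments.

Section Main.
Variables (R : realType) (n : nat) (x : 'I_n -> 'rV[R]_2) (F : {set {set 'I_n}}).
Hypothesis n_gt0 : (0 < n)%N.
Hypothesis x_inj : injective x.
Hypothesis F_fd : farthest_delaunay x F.

Local Notation dual_face_centre s :=
  (exists2 A, A \in F & relint (image_set (T x) (face_set x A)) s /\ VD x A s).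

Lemma farthest_extreme s j : (forall i, sqdist s (x i) <= sqdist s (x j)) -> extreme x j.
Proof.
move=> j_far /hull_weightsP [nu [nu_ne nu_ge0 nu_sum1 xjE]].
have spread := parallel_axis x s nu_sum1; rewrite -xjE in spread.
have [i nui] := weight_neq0 nu_sum1.
have /eqP := nu_ne i nui; apply.
have var0 : \sum_k nu k * sqdist (x j) (x k) = 0.
  apply/eqP; rewrite eq_le sumr_ge0 ?andbT => [|k _]; last by rewrite mulr_ge0 ?sqdist_ge0.
  by have := avg_le nu_sum1 nu_ge0 j_far; rewrite spread; have := sqdist_ge0 s (x j); lra.
have var_ge0 k : true -> 0 <= nu k * sqdist (x j) (x k) by rewrite mulr_ge0 ?sqdist_ge0.
have /eqP := psumr_eq0P var_ge0 var0 (i := i) isT.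
by rewrite mulf_eq0 (negbTE nui) /= => /eqP/sqdist_eq0/x_inj ->.
Qed.

Lemma circumdisc_active s (D : {set 'I_n}) (beta nu : 'I_n -> R) :
  D \in F -> #|D| = 3 ->
  (forall i, beta i != 0 -> i \in D) -> (forall i, 0 <= beta i) -> \sum_i beta i = 1 ->
  (forall i, nu i != 0 -> Vreg x i s) -> (forall i, 0 <= nu i) -> \sum_i nu i = 1 ->
  \sum_i beta i *: x i = \sum_i nu i *: x i ->
  forall i, beta i != 0 -> Vreg x i s.
Proof.
move=> DF D3 betaD beta_ge0 beta_sum1 nu_act nu_ge0 nu_sum1 same_point.
have [o [r [o_on o_in]]] := F_fd.2 D DF D3.
have beta_o : \sum_i beta i * sqdist o (x i) = r.
  by apply: avg_supp_const => // i /betaD /o_on.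
have nu_o : \sum_i nu i * sqdist o (x i) <= r by apply: avg_le.
have nu_s : \sum_i nu i * sqdist s (x i) = maxdist x s by apply: avg_supp_const.
have beta_split u := parallel_axis x u beta_sum1.
have nu_split u := parallel_axis x u nu_sum1.
rewrite same_point in beta_split.
(* At the circumcentre the nu-variance of c is at most its beta-variance;
   at s this gives maxdist <= the beta-average of the squared distances. *)
apply: (avg_eq_max beta_sum1 beta_ge0 (le_maxdist x s)).
have := beta_split o; have := nu_split o; have := beta_split s; have := nu_split s.
lra.
Qed.

Lemma support_face (A : {set 'I_n}) (beta : 'I_n -> R) : A \in F ->
  (forall i, beta i != 0 -> i \in A) -> \sum_i beta i = 1 -> [set i | beta i != 0] \in F.
Proof.
move=> AF betaA beta_sum1; case: F_fd => -[_ F_sub _ _ _] _.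
apply: (F_sub A) => //; first by apply/fintype.subsetP => i; rewrite inE => /betaA.
by have [i nui] := weight_neq0 beta_sum1; apply/finset.set0Pn; exists i; rewrite inE.
Qed.

Lemma face_of_active_weights (D : {set 'I_n}) (beta : 'I_n -> R) : D \in F ->
  (forall i, beta i != 0 -> i \in D) -> (forall i, 0 <= beta i) -> \sum_i beta i = 1 ->
  (forall i, beta i != 0 -> Vreg x i (T x (\sum_i beta i *: x i))) ->
  dual_face_centre (T x (\sum_i beta i *: x i)).
Proof.
move=> DF betaD beta_ge0 beta_sum1 active.
have AF := support_face DF betaD beta_sum1.
case: F_fd => -[F_indep _ _ _ _] _; have [_ indep] := F_indep _ AF.
exists [set i | beta i != 0] => //; split.
  apply: relint_T_face => //.
    by move=> i; rewrite inE negbK => /eqP.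
  by move=> i; rewrite inE lt_def => ->; rewrite beta_ge0.
by move=> j; rewrite inE => /active.
Qed.

Lemma relint_face_subset (A B : {set 'I_n}) (beta : 'I_n -> R) : A \in F -> B \in F ->
  (forall i, (i \in A) = (beta i != 0)) -> (forall i, 0 <= beta i) -> \sum_i beta i = 1 ->
  face_set x B (\sum_i beta i *: x i) -> A \subset B.
Proof.
move=> AF BF betaA beta_ge0 beta_sum1 cB.
case: F_fd => -[F_indep _ _ _ F_inter] _.
have cA : face_set x A (\sum_i beta i *: x i).
  by apply/hull_weightsP; exists beta; split => // i; rewrite betaA.
have /hull_weightsP [gam [gamAB _ gam_sum1 gamE]] := F_inter A B _ AF BF cA cB.
have gam_beta : gam =1 beta.
  apply: (aff_indep_weights_eq (F_indep _ AF).2) => [i|i||//]; last by rewrite gam_sum1.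
    by apply: contraNeq => /gamAB; rewrite inE => /andP [].
  by rewrite betaA negbK => /eqP.
apply/fintype.subsetP => i; rewrite betaA -gam_beta => /gamAB.
by rewrite inE => /andP [].
Qed.

Lemma sum_support2 (V : nmodType) a b (f : 'I_n -> V) : a != b ->
  (forall i, i \notin [set a; b] -> f i = 0) -> \sum_i f i = f a + f b.
Proof.
move=> ab f0; rewrite (bigD1 a) //= (bigD1 b) 1?eq_sym //= big1 ?addr0 // => i /andP [ib ia].
by apply: f0; rewrite !inE negb_or ia ib.
Qed.

Lemma edge_face_line a b p : a != b -> face_set x [set a; b] p ->
  exists t : R, p = x a + t *: (x b - x a).
Proof.
move=> ab /hull_weightsP [om [omA _ om_sum1 ->]]; exists (om b).
have om0 i : i \notin [set a; b] -> om i = 0 by apply: contraNeq => /omA.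
rewrite (sum_support2 ab) => [|i /om0 ->]; last by rewrite scale0r.
have -> : om a = 1 - om b by rewrite -om_sum1 (sum_support2 ab om0) addrK.
by apply: row2P; rewrite !mxE; ring.
Qed.

Lemma edge_weights (A : {set 'I_n}) (beta nu : 'I_n -> R) : A \in F -> #|A| = 2 ->
  (forall i, (i \in A) = (beta i != 0)) -> (forall i, 0 <= beta i) -> \sum_i beta i = 1 ->
  (forall D, D \in F -> face_set x D (\sum_i beta i *: x i) -> #|D| != 3) ->
  (forall i, nu i != 0 -> extreme x i) -> (forall i, 0 <= nu i) -> \sum_i nu i = 1 ->
  \sum_i beta i *: x i = \sum_i nu i *: x i -> forall i, i \in A -> nu i != 0.
Proof.
move=> AF A2 betaA beta_ge0 beta_sum1 no_tri nu_ext nu_ge0 nu_sum1 same_point.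
set c := \sum_i beta i *: x i in no_tri same_point.
case: F_fd => -[F_indep F_sub F_vertex F_cover _] _.
have /eqP/cards2P [a [b [ab A_ab]]] := A2.
have vertex_ext j : j \in A -> extreme x j.
  move=> jA; apply/F_vertex/(F_sub A) => //; first by rewrite finset.sub1set.
  by apply/finset.set0Pn; exists j; rewrite inE.
have cA : face_set x A c by apply/hull_weightsP; exists beta; split => // i; rewrite betaA.
suff nuA k : k \notin A -> nu k = 0.
  have beta_nu : beta =1 nu.
    apply: (aff_indep_weights_eq (F_indep _ AF).2) => // [i|]; last by rewrite nu_sum1.
    by rewrite betaA negbK => /eqP.
  by move=> i; rewrite -beta_nu -betaA.
(* A weighted vertex x_k outside A: the face B containing c and a point of
   ]c, x_k] contains A and is no triangle, so B = A and x_k lies on the line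
   of the edge, contradicting extremality. *)
move=> kA; apply/eqP; apply: contraT => nuk.
have c_hull : hull (fun q => exists2 j, extreme x j & q = x j) c.
  by apply/hull_weightsP; exists nu; split.
have [B BF [cB [e [e_gt0 e_le1 pB]]]] : exists2 B, B \in F & face_set x B c /\
    exists e : R, [/\ 0 < e, e <= 1 & face_set x B (c + e *: (x k - c))].
  apply: limit_face => e e_gt0 e_le1; apply/F_cover.
  by apply: hull_segment c_hull (hull_vertex x (nu_ext k nuk)) _; rewrite ltW.
have AB : A \subset B := relint_face_subset AF BF betaA beta_ge0 beta_sum1 cB.
have BA : B = A.
  have B_le3 : (#|B| <= 3)%N by case/andP: (F_indep _ BF).1.
  apply/eqP; rewrite eq_sym eqEcard AB A2 /=.
  by move: B_le3 (no_tri _ BF cB); case: #|B| => [|[|[|[|]]]].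
rewrite BA A_ab in pB cA.
have [t1 cE] := edge_face_line ab cA; have [t2 pE] := edge_face_line ab pB.
have xkE : x k = x a + (t1 + (t2 - t1) / e) *: (x b - x a).
  have e_neq0 : e != 0 by rewrite gt_eqF.
  have coord j : x k r0 j = ((x a + t2 *: (x b - x a)) r0 j - c r0 j) / e + c r0 j.
    by rewrite -pE !mxE; field.
  by apply: row2P; rewrite !coord cE !mxE; field.
have aA : a \in A by rewrite A_ab !inE eqxx.
have bA : b \in A by rewrite A_ab !inE eqxx orbT.
have [] := extreme_on_line ab (vertex_ext a aA) (vertex_ext b bA) (nu_ext k nuk) xkE.
  by move=> kE; rewrite kE aA in kA.
by move=> kE; rewrite kE bA in kA.
Qed.

Lemma nontriangle_active (A0 : {set 'I_n}) (beta nu : 'I_n -> R) : A0 \in F ->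
  (forall i, beta i != 0 -> i \in A0) -> (forall i, 0 <= beta i) -> \sum_i beta i = 1 ->
  (forall D, D \in F -> face_set x D (\sum_i beta i *: x i) -> #|D| != 3) ->
  (forall i, nu i != 0 -> extreme x i) -> (forall i, 0 <= nu i) -> \sum_i nu i = 1 ->
  \sum_i beta i *: x i = \sum_i nu i *: x i -> forall i, beta i != 0 -> nu i != 0.
Proof.
move=> A0F betaA0 beta_ge0 beta_sum1 no_tri nu_ext nu_ge0 nu_sum1 same_point.
set A := [set i | beta i != 0].
have AF : A \in F := support_face A0F betaA0 beta_sum1.
have betaA i : (i \in A) = (beta i != 0) by rewrite inE.
case: F_fd => -[F_indep _ F_vertex _ _] _.
have A_size : #|A| = 1%N \/ #|A| = 2.
  have cA : face_set x A (\sum_i beta i *: x i).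
    by apply/hull_weightsP; exists beta; split => // i; rewrite betaA.
  move: (F_indep _ AF).1 (no_tri _ AF cA).
  by case: #|A| => [|[|[|[|]]]] //; auto.
case: A_size => [/eqP/cards1P [a A_a] | A2]; last first.
  by move=> i; rewrite -betaA; apply: edge_weights.
have beta_a i : beta i != 0 -> i = a by rewrite -betaA A_a inE => /eqP.
have beta_supp i : i != a -> beta i = 0 by apply: contraNeq => /beta_a ->; rewrite eqxx.
have xaE : x a = \sum_i nu i *: x i.
  rewrite -same_point (bigD1 a) //= big1 ?addr0 => [|i /beta_supp ->]; last by rewrite scale0r.
  by rewrite -[LHS]scale1r -beta_sum1 (bigD1 a) //= big1 ?addr0 // => i /beta_supp.
move=> i /beta_a ->; apply: extreme_weight_neq0 xaE => //.
by apply/F_vertex; rewrite -A_a.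
Qed.

Lemma minpower_centre_face s : minpower_centre x s -> dual_face_centre s.
Proof.
move=> s_min; rewrite -(TinvK x s); set c := Tinv x s.
pose act := [set j | sqdist s (x j) == maxdist x s].
have [j0 j0_max] := maxdist_attained x s n_gt0.
have /hull_weightsP [nu [nu_act nu_ge0 nu_sum1 cE]] : face_set x act c.
  apply: (face_set_of_no_separation (j0 := j0)); first by rewrite inE j0_max.
  move=> d; have [j j_act j_dir] := minpower_first_order n_gt0 s_min d.
  by exists j; rewrite ?inE ?j_act.
have nu_Vreg i : nu i != 0 -> Vreg x i (T x c).
  by move/nu_act; rewrite inE TinvK => /eqP.
have nu_ext i : nu i != 0 -> extreme x i.
  move/nu_Vreg => far; apply: (farthest_extreme (s := T x c)) => k.
  by rewrite far le_maxdist.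
case: F_fd => -[_ _ _ F_cover _] _.
have [A0 A0F /hull_weightsP [beta [betaA0 beta_ge0 beta_sum1 c_beta]]] :
    exists2 A0, A0 \in F & face_set x A0 c.
  by apply/F_cover/hull_weightsP; exists nu.
have [[D DF [cD D3]]|no_tri] := pselect (exists2 D, D \in F & face_set x D c /\ #|D| = 3).
  move/hull_weightsP: cD => [gam [gamD gam_ge0 gam_sum1 c_gam]].
  rewrite c_gam; apply: (face_of_active_weights DF gamD gam_ge0 gam_sum1).
  rewrite -c_gam; apply: (circumdisc_active DF D3 gamD gam_ge0 gam_sum1 nu_Vreg nu_ge0 nu_sum1).
  by rewrite -c_gam.
rewrite c_beta; apply: (face_of_active_weights A0F betaA0 beta_ge0 beta_sum1).
rewrite -c_beta => i beta_i; apply/nu_Vreg.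
have no_tri' D : D \in F -> face_set x D (\sum_i beta i *: x i) -> #|D| != 3.
  by rewrite -c_beta => DF cD; apply/eqP => D3; apply: no_tri; exists D.
have same_point : \sum_i beta i *: x i = \sum_i nu i *: x i by rewrite -c_beta.
exact: (nontriangle_active A0F betaA0 beta_ge0 beta_sum1 no_tri' nu_ext nu_ge0 nu_sum1 same_point).
Qed.

End Main.

Theorem theorem1 (R : realType) (n : nat) (x : 'I_n -> 'rV[R]_2)
    (F : {set {set 'I_n}}) :
  (0 < n)%N -> injective x -> farthest_delaunay x F ->
  forall s : 'rV[R]_2,
    minpower_centre x s <->
    exists2 A, A \in F &
      relint (image_set (T x) (face_set x A)) s /\ VD x A s.
Proof.
move=> n_gt0 x_inj F_fd s; split; first exact: minpower_centre_face.
case=> A AF [[[c [/hull_weightsP [beta [betaA beta_ge0 beta_sum1 cE]] ->]] _] Vreg_A].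
apply: (minpower_centre_T n_gt0 beta_ge0 beta_sum1 cE) => i /betaA.
exact: Vreg_A.
Qed.
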